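(* Let $\mathcal F$ be a proper filter on $\omega$. The games $\mathfrak G_1(\mathcal F)$ and $\mathfrak G(\mathrm{Fr},[\omega]^{<\omega},\mathcal F)$ are equivalent: a player has a winning strategy in one game if and only if the same player has a winning strategy in the other. Consequently, in either game, player I has a winning strategy if and only if $\mathcal F$ is meager, and player II never has a winning strategy.
   Context: A filter on $\omega$ is a family $\mathcal F\subseteq\mathcal P(\omega)$ closed under finite intersections and supersets and containing all cofinite sets; it is proper if all its members are infinite. $\mathcal P(\omega)$ is identified with $2^\omega$ with the product topology; ''meager'' refers to this topology. $\mathrm{Fr}$ is the family of cofinite subsets of $\omega$. Game $\mathfrak G(\mathcal X,[\omega]^{<\omega},\mathcal Z)$: at each stage $k\in\omega$, player I chooses $X_k\in\mathcal X$ and player II responds with a nonempty finite set $s_k\subseteq X_k$; II wins if $\bigcup_k s_k\in\mathcal Z$, otherwise I wins. Game $\mathfrak G_1(\mathcal F)$: at each stage $k$, player I chooses $m_k\in\omega$ and player II responds with $n_k\in\omega$; II wins if $n_0<n_1<\cdots$, $m_k<n_k$ for infinitely many $k$, and $\{n_k:k\in\omega\}\in\mathcal F$; otherwise I wins. *)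

(* Subsets of omega are predicates nat -> Prop;
   P(omega) = 2^omega is the space of such predicates (bit i of X is "X i"). *)
From Stdlib Require Import List Arith.
Import ListNotations.

Definition subset_w := nat -> Prop.

Definition cofinite (X : subset_w) : Prop := exists N, forall n, N <= n -> X n.
Definition infinite_set (X : subset_w) : Prop := forall N, exists n, N <= n /\ X n.

Definition is_filter (F : subset_w -> Prop) : Prop :=
  (forall X, cofinite X -> F X) /\
  (forall X Y, F X -> F Y -> F (fun n => X n /\ Y n)) /\
  (forall X Y, F X -> (forall n, X n -> Y n) -> F Y).

Definition proper_filter (F : subset_w -> Prop) : Prop :=
  is_filter F /\ (forall X, F X -> infinite_set X).

(* Topology of 2^omega: basic clopen set determined by a finite initial segment. *)
Definition cyl (s : list bool) (X : subset_w) : Prop :=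
  forall i, i < length s -> (X i <-> nth i s false = true).

Definition nowhere_dense (A : subset_w -> Prop) : Prop :=
  forall s : list bool, exists t : list bool,
    forall X, cyl (s ++ t) X -> ~ A X.

Definition meager (A : subset_w -> Prop) : Prop :=
  exists N : nat -> (subset_w -> Prop),
    (forall k, nowhere_dense (N k)) /\ (forall X, A X -> exists k, N k X).

Definition hist {A : Type} (x : nat -> A) (k : nat) : list A := map x (seq 0 k).

(* Finite sets chosen by II are represented by lists of naturals. *)
Definition legal_finite (s : list nat) (X : subset_w) : Prop :=
  s <> [] /\ forall n, In n s -> X n.

Definition union_of (s : nat -> list nat) : subset_w := fun n => exists k, In n (s k).

(* Strategy of I: from the previous moves of II, a cofinite set. *)
Definition I_wins_G (F : subset_w -> Prop) : Prop :=
  exists sigma : list (list nat) -> subset_w,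
    (forall h, cofinite (sigma h)) /\
    forall s : nat -> list nat,
      (forall k, legal_finite (s k) (sigma (hist s k))) ->
      ~ F (union_of s).

(* Strategy of II: from the previous moves of I and I's current move, a finite set. *)
Definition II_wins_G (F : subset_w -> Prop) : Prop :=
  exists tau : list subset_w -> subset_w -> list nat,
    (forall h X, cofinite X -> legal_finite (tau h X) X) /\
    forall Xs : nat -> subset_w,
      (forall k, cofinite (Xs k)) ->
      F (union_of (fun k => tau (hist Xs k) (Xs k))).

Definition II_wins_play_G1 (F : subset_w -> Prop) (m n : nat -> nat) : Prop :=
  (forall k, n k < n (S k)) /\
  (forall K, exists k, K <= k /\ m k < n k) /\
  F (fun x => exists k, n k = x).

Definition I_wins_G1 (F : subset_w -> Prop) : Prop :=
  exists sigma : list nat -> nat,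
    forall n : nat -> nat,
      ~ II_wins_play_G1 F (fun k => sigma (hist n k)) n.

Definition II_wins_G1 (F : subset_w -> Prop) : Prop :=
  exists tau : list nat -> nat -> nat,
    forall m : nat -> nat,
      II_wins_play_G1 F m (fun k => tau (hist m k) (m k)).

(* If F is covered by nowhere dense sets N_k, then above any finite pattern of
   length u there is a block [u, b) whose filling keeps every pattern of length u
   out of N_0, ..., N_k.  Player I forces II's set to miss infinitely many such
   blocks; filling them in yields a superset lying in no N_k, hence outside F, so
   II's set is not in F either.

   Conversely, a winning strategy of I is bounded on the finitely many positions
   below any bound, which yields an interval partition such that every member of F meets
   almost every interval (otherwise II enumerates that member, waiting for a
   missed interval, and wins); such a filter is meager.

   II never wins: I runs two plays against II's strategy so that II's answers in
   the two plays leapfrog each other, making the two resulting members of F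
   disjoint, which a proper filter forbids.  In the game G_1 this needs one more
   observation: if II's replies at some position are bounded, I plays the bound,
   and since II must eventually beat I's move, I reaches a position where II's
   reply can be pushed arbitrarily high. *)

From Stdlib Require Import List Arith Lia Classical ClassicalEpsilon.
Import ListNotations.

Lemma least_ex (P : nat -> Prop) :
  (exists n, P n) -> exists n, P n /\ forall m, m < n -> ~ P m.
Proof.
  intros [n Hn]. induction n as [n IH] using lt_wf_ind.
  destruct (classic (exists m, m < n /\ P m)) as [[m [Hmn Hm]] | Hnone].
  - exact (IH m Hmn Hm).
  - exists n. split; [exact Hn |]. intros m Hmn Hm. apply Hnone. eauto.
Qed.

Lemma le_list_max x l : In x l -> x <= list_max l.
Proof.
  intros Hx. assert (H : Forall (fun k => k <= list_max l) l) by (apply list_max_le; lia).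
  rewrite Forall_forall in H. exact (H x Hx).
Qed.

Definition increasing (f : nat -> nat) : Prop := forall k, f k < f (S k).

Section Increasing.
Variable f : nat -> nat.
Hypothesis Hf : increasing f.

Lemma increasing_lt k k' : k < k' -> f k < f k'.
Proof. induction 1; [apply Hf | specialize (Hf m); lia]. Qed.

Lemma increasing_le k k' : k <= k' -> f k <= f k'.
Proof. intros H. destruct (Nat.eq_dec k k'); [subst; lia | pose proof (increasing_lt k k'); lia]. Qed.

Lemma increasing_ge_id k : k <= f k.
Proof. induction k; [lia | specialize (Hf k); lia]. Qed.

Lemma increasing_bracket x : f 0 <= x -> exists j, f j <= x < f (S j).
Proof.
  intros H0. destruct (least_ex (fun j => x < f j)) as [j [Hj Hmin]].
  { exists (S x). pose proof (increasing_ge_id (S x)). lia. }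
  destruct j as [|j]; [lia |]. exists j. specialize (Hmin j). lia.
Qed.

End Increasing.

Lemma hist_length {A} (x : nat -> A) k : length (hist x k) = k.
Proof. unfold hist. rewrite length_map, length_seq. reflexivity. Qed.

Lemma in_hist {A} (x : nat -> A) k a : In a (hist x k) <-> exists j, j < k /\ x j = a.
Proof.
  unfold hist. rewrite in_map_iff. split.
  - intros [j [Hj Hin]]. apply in_seq in Hin. exists j. split; [lia | exact Hj].
  - intros [j [Hj Hx]]. exists j. split; [exact Hx | apply in_seq; lia].
Qed.

Lemma hist_S {A} (x : nat -> A) k : hist x (S k) = hist x k ++ [x k].
Proof. unfold hist. rewrite seq_S, map_app. reflexivity. Qed.

Lemma nth_hist {A} (x : nat -> A) n i d : i < n -> nth i (hist x n) d = x i.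
Proof.
  intros Hi. unfold hist. rewrite (nth_indep _ d (x 0)) by (rewrite length_map, length_seq; lia).
  rewrite map_nth, seq_nth by lia. reflexivity.
Qed.

Lemma firstn_hist {A} (x : nat -> A) n i : i <= n -> firstn i (hist x n) = hist x i.
Proof.
  intros Hi. induction n as [|n IH].
  - replace i with 0 by lia. reflexivity.
  - destruct (Nat.eq_dec i (S n)) as [-> | Hne].
    + apply firstn_all2. rewrite hist_length. lia.
    + rewrite hist_S, firstn_app, hist_length, IH by lia.
      replace (i - n) with 0 by lia. apply app_nil_r.
Qed.

(** * Meager filters: player I wins *)

Lemma cyl_app s t X : cyl (s ++ t) X -> cyl s X.
Proof.
  intros H i Hi. rewrite <- (app_nth1 s t false Hi). apply H. rewrite length_app. lia.
Qed.

Lemma nowhere_dense_sub (A B : subset_w -> Prop) :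
  (forall X, A X -> B X) -> nowhere_dense B -> nowhere_dense A.
Proof. intros HAB HB s. destruct (HB s) as [t Ht]. exists t. intros X HX HA. exact (Ht X HX (HAB X HA)). Qed.

Lemma nowhere_dense_or (A B : subset_w -> Prop) :
  nowhere_dense A -> nowhere_dense B -> nowhere_dense (fun X => A X \/ B X).
Proof.
  intros HA HB s. destruct (HA s) as [t Ht]. destruct (HB (s ++ t)) as [t' Ht'].
  exists (t ++ t'). intros X HX. rewrite app_assoc in HX. intros [HAX | HBX].
  - exact (Ht X (cyl_app _ _ _ HX) HAX).
  - exact (Ht' X HX HBX).
Qed.

Definition some_below (N : nat -> subset_w -> Prop) (j : nat) : subset_w -> Prop :=
  fun X => exists i, i <= j /\ N i X.

Lemma nowhere_dense_some_below N :
  (forall k, nowhere_dense (N k)) -> forall j, nowhere_dense (some_below N j).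
Proof.
  intros HN. induction j as [|j IH].
  - apply (nowhere_dense_sub _ (N 0)); [| apply HN].
    intros X [i [Hi HX]]. replace i with 0 in HX by lia. exact HX.
  - apply (nowhere_dense_sub _ (fun X => some_below N j X \/ N (S j) X));
      [| exact (nowhere_dense_or _ _ IH (HN (S j)))].
    intros X [i [Hi HX]]. destruct (Nat.eq_dec i (S j)) as [-> | Hne]; [right; exact HX |].
    left. exists i. split; [lia | exact HX].
Qed.

Lemma nowhere_dense_common_extension A : nowhere_dense A ->
  forall L : list (list bool), exists t, forall s, In s L -> forall X, cyl (s ++ t) X -> ~ A X.
Proof.
  intros HA L. induction L as [|s0 L [t Ht]].
  - exists []. intros s [].
  - destruct (HA (s0 ++ t)) as [t' Ht']. exists (t ++ t').
    intros s Hs X HX. rewrite app_assoc in HX. destruct Hs as [<- | Hs].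
    + exact (Ht' X HX).
    + exact (Ht s Hs X (cyl_app _ _ _ HX)).
Qed.

Fixpoint bool_lists (u : nat) : list (list bool) :=
  match u with
  | 0 => [[]]
  | S u => map (cons true) (bool_lists u) ++ map (cons false) (bool_lists u)
  end.

Lemma in_bool_lists s : In s (bool_lists (length s)).
Proof.
  induction s as [|[] s IH]; simpl; [auto | |]; apply in_or_app; [left | right]; apply in_map, IH.
Qed.

Lemma nowhere_dense_uniform_extension A : nowhere_dense A ->
  forall u, exists t, forall s, length s = u -> forall X, cyl (s ++ t) X -> ~ A X.
Proof.
  intros HA u. destruct (nowhere_dense_common_extension A HA (bool_lists u)) as [t Ht].
  exists t. intros s <-. apply Ht, in_bool_lists.
Qed.

Definition bdec (P : Prop) : bool := if excluded_middle_informative P then true else false.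

Lemma bdec_true P : bdec P = true <-> P.
Proof. unfold bdec. destruct (excluded_middle_informative P); split; congruence || tauto. Qed.

Definition pattern (Y : subset_w) (n : nat) : list bool := map (fun i => bdec (Y i)) (seq 0 n).

Lemma pattern_length Y n : length (pattern Y n) = n.
Proof. unfold pattern. rewrite length_map, length_seq. reflexivity. Qed.

Lemma pattern_nth Y n i : i < n -> nth i (pattern Y n) false = bdec (Y i).
Proof.
  intros Hi. unfold pattern. rewrite (nth_indep _ false (bdec (Y 0))) by (rewrite length_map, length_seq; lia).
  rewrite (map_nth (fun i => bdec (Y i))), seq_nth by lia. reflexivity.
Qed.

Section MeagerFilter.
Variables (F : subset_w -> Prop) (N : nat -> subset_w -> Prop).
Hypothesis HF : is_filter F.
Hypothesis N_nowhere_dense : forall k, nowhere_dense (N k).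
Hypothesis N_cover : forall X, F X -> exists k, N k X.

(* The block [u k, u k + length (fill k)) can be filled in so that, whatever lies
   below it, the result avoids N_0, ..., N_k.  A set missing infinitely many
   pairwise ordered blocks has a superset, namely itself with those blocks
   filled, outside every N_j; upward closure then keeps it out of F. *)
Lemma not_filter_missing_blocks (u : nat -> nat) (fill : nat -> list bool) (U : subset_w) (P : nat -> Prop) :
  (forall k s, length s = u k -> forall X, cyl (s ++ fill k) X -> ~ some_below N k X) ->
  (forall k k', P k -> P k' -> k < k' -> u k + length (fill k) <= u k') ->
  (forall K, exists k, K <= k /\ P k) ->
  (forall k x, P k -> u k <= x < u k + length (fill k) -> ~ U x) ->
  ~ F U.
Proof.
  intros Hfill Hord Hinf Hmiss HU.
  set (Y := fun x => U x \/ exists k, P k /\ u k <= x < u k + length (fill k) /\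
                                      nth (x - u k) (fill k) false = true).
  assert (HY : F Y) by (apply (proj2 (proj2 HF)) with U; [exact HU | intros x Hx; left; exact Hx]).
  destruct (N_cover Y HY) as [j Hj]. destruct (Hinf j) as [k [Hjk Pk]].
  apply (Hfill k (pattern Y (u k)) (pattern_length _ _) Y); [| exists j; auto].
  intros i Hi. rewrite length_app, pattern_length in Hi.
  destruct (lt_dec i (u k)) as [Hlo | Hhi].
  - rewrite app_nth1, pattern_nth, bdec_true by (rewrite ?pattern_length; lia). tauto.
  - rewrite app_nth2, pattern_length by (rewrite pattern_length; lia). split.
    + intros [HUi | [k' [Pk' [Hk' Hn]]]]; [exfalso; apply (Hmiss k i Pk); [lia | exact HUi] |].
      destruct (lt_eq_lt_dec k k') as [[Hlt | <-] | Hgt]; [| exact Hn |].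
      * specialize (Hord k k' Pk Pk' Hlt). lia.
      * specialize (Hord k' k Pk' Pk Hgt). lia.
    + intros Hn. right. exists k. repeat split; auto; lia.
Qed.

Lemma uniform_fillers : exists fill : nat -> nat -> list bool,
  forall k u s, length s = u -> forall X, cyl (s ++ fill k u) X -> ~ some_below N k X.
Proof.
  apply (choice (fun k fk => forall u s, length s = u -> forall X, cyl (s ++ fk u) X -> ~ some_below N k X)).
  intros k. apply (choice (fun u t => forall s, length s = u -> forall X, cyl (s ++ t) X -> ~ some_below N k X)).
  apply nowhere_dense_uniform_extension, nowhere_dense_some_below, N_nowhere_dense.
Qed.

Lemma meager_I_wins_G : I_wins_G F.
Proof.
  destruct uniform_fillers as [fill Hfill].
  set (start := fun h : list (list nat) => S (list_max (concat h))).
  exists (fun h n => start h + length (fill (length h) (start h)) <= n). split.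
  { intros h. eexists. intros n Hn. exact Hn. }
  intros s Hs.
  set (lo := fun k => start (hist s k)). set (blk := fun k => fill k (lo k)).
  assert (Hhi : forall k x, In x (s k) -> lo k + length (blk k) <= x).
  { intros k x Hx. apply (proj2 (Hs k)) in Hx. rewrite hist_length in Hx. exact Hx. }
  assert (Hlo : forall k k' x, k' < k -> In x (s k') -> x < lo k).
  { intros k k' x Hk Hx. apply le_n_S, le_list_max, in_concat.
    exists (s k'). split; [apply in_hist; eauto | exact Hx]. }
  assert (Hord : forall k k', k < k' -> lo k + length (blk k) <= lo k').
  { intros k k' Hk. destruct (s k) as [|y l] eqn:E; [destruct (Hs k); contradiction |].
    assert (Hy : In y (s k)) by (rewrite E; left; reflexivity).
    specialize (Hhi k y Hy). specialize (Hlo k' k y Hk Hy). lia. }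
  apply (not_filter_missing_blocks lo blk (union_of s) (fun _ => True)).
  - intros k. apply Hfill.
  - intros k k' _ _. apply Hord.
  - intros K. exists K. auto.
  - intros k x _ Hx [k' Hk']. destruct (lt_dec k' k) as [Hlt | Hge].
    + specialize (Hlo k k' x Hlt Hk'). lia.
    + specialize (Hhi k' x Hk'). destruct (Nat.eq_dec k k') as [<- | Hne]; [lia |].
      specialize (Hord k k' ltac:(lia)). lia.
Qed.

Lemma meager_I_wins_G1 : I_wins_G1 F.
Proof.
  destruct uniform_fillers as [fill Hfill].
  set (start := fun h : list nat => S (list_max h)).
  exists (fun h => start h + length (fill (length h) (start h))).
  intros n [Hinc [Hinf Hrange]].
  set (lo := fun k => start (hist n k)). set (blk := fun k => fill k (lo k)).
  assert (Hlo : forall k k', k' < k -> n k' < lo k).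
  { intros k k' Hk. apply le_n_S, le_list_max, in_hist. eauto. }
  apply (not_filter_missing_blocks lo blk (fun x => exists k, n k = x)
           (fun k => lo k + length (blk k) < n k)).
  - intros k. apply Hfill.
  - intros k k' Pk _ Hk. specialize (Hlo k' k Hk). lia.
  - intros K. destruct (Hinf K) as [k [Hk Hm]]. exists k. split; [exact Hk |].
    rewrite hist_length in Hm. exact Hm.
  - intros k x Pk Hx [k' <-]. destruct (lt_dec k' k) as [Hlt | Hge].
    + specialize (Hlo k k' Hlt). lia.
    + pose proof (increasing_le n Hinc k k' ltac:(lia)). lia.
  - exact Hrange.
Qed.

End MeagerFilter.

(** * A winning strategy of player I makes the filter meager *)

Lemma meager_of_interval_partition (F : subset_w -> Prop) (i : nat -> nat) : increasing i ->
  (forall X, F X -> exists K, forall n, K <= n -> exists x, i n <= x < i (S n) /\ X x) ->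
  meager F.
Proof.
  intros Hi HF.
  exists (fun K X => forall n, K <= n -> exists x, i n <= x < i (S n) /\ X x). split; [| exact HF].
  intros K s. set (n := Nat.max K (length s)). pose proof (increasing_ge_id i Hi n).
  exists (repeat false (i (S n) - length s)). intros X HX Hmeets.
  destruct (Hmeets n ltac:(lia)) as [x [Hx HXx]]. specialize (Hi n).
  assert (Hlen : x < length (s ++ repeat false (i (S n) - length s)))
    by (rewrite length_app, repeat_length; lia).
  apply (HX x Hlen) in HXx. rewrite app_nth2, nth_repeat in HXx by lia. discriminate.
Qed.

Lemma enumerate_infinite (X : subset_w) : infinite_set X ->
  exists e, increasing e /\ (forall k, X (e k)) /\ (forall x, X x -> exists k, e k = x).
Proof.
  intros Hinf.
  destruct (choice (fun c y => (c <= y /\ X y) /\ forall z, z < y -> ~ (c <= z /\ X z))) as [next Hnext].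
  { intros c. apply least_ex. destruct (Hinf c) as [y Hy]. eauto. }
  set (e := fix e k := match k with 0 => next 0 | S k => next (S (e k)) end).
  assert (He : increasing e) by (intros k; apply (Hnext (S (e k)))).
  exists e. split; [exact He | split].
  - intros [|k]; apply Hnext.
  - intros x Hx. destruct (least_ex (fun k => x <= e k)) as [k [Hk Hmin]].
    { exists x. apply (increasing_ge_id e He). }
    exists k. assert (Hlow : k = 0 \/ exists k', k = S k' /\ e k' < x)
      by (destruct k as [|k']; [left; reflexivity | right; exists k'; split; [reflexivity |]];
          specialize (Hmin k' ltac:(lia)); lia).
    destruct (Nat.eq_dec (e k) x) as [Heq | Hne]; [exact Heq | exfalso].
    destruct Hlow as [-> | [k' [-> Hk']]].
    + apply (proj2 (Hnext 0) x); [simpl in *; lia | split; [lia | exact Hx]].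
    + apply (proj2 (Hnext (S (e k'))) x); [simpl in *; lia | split; [lia | exact Hx]].
Qed.

Definition bounded_on {A} (S : A -> Prop) : Prop :=
  forall f : A -> nat, exists B, forall a, S a -> f a <= B.

Lemma bounded_on_lt c : bounded_on (fun x => x < c).
Proof.
  induction c as [|c IH]; intros f; [exists 0; intros; lia |].
  destruct (IH f) as [B HB]. exists (Nat.max B (f c)). intros a Ha.
  destruct (Nat.eq_dec a c) as [-> | Hne]; [lia | specialize (HB a ltac:(lia)); lia].
Qed.

Lemma bounded_on_lists {A} (S : A -> Prop) : bounded_on S ->
  forall c, bounded_on (fun l : list A => length l <= c /\ Forall S l).
Proof.
  intros HS c. induction c as [|c IH]; intros f.
  - exists (f []). intros [|a l] [Hl _]; simpl in *; lia.
  - destruct (choice (fun a B => forall l, length l <= c /\ Forall S l -> f (a :: l) <= B)) as [g Hg].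
    { intros a. apply (IH (fun l => f (a :: l))). }
    destruct (HS g) as [B HB]. exists (Nat.max (f []) B). intros [|a l] [Hl Hall]; [lia |].
    inversion Hall; subst. simpl in Hl.
    specialize (Hg a l ltac:(split; [lia | assumption])). specialize (HB a ltac:(assumption)). lia.
Qed.

Definition short (c : nat) (l : list nat) : Prop := length l <= c /\ Forall (fun x => x < c) l.

Lemma short_hist (e : nat -> nat) c k : k <= c -> (forall j, j < k -> e j < c) -> short c (hist e k).
Proof.
  intros Hk He. split; [rewrite hist_length; exact Hk |].
  apply Forall_forall. intros x Hx. apply in_hist in Hx. destruct Hx as [j [Hj <-]]. auto.
Qed.

Fixpoint grid (bound : nat -> nat) (n : nat) : nat :=
  match n with
  | 0 => 0
  | S n => S (Nat.max (grid bound n) (bound (grid bound n)))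
  end.

Lemma grid_increasing bound : increasing (grid bound).
Proof. intros n. simpl. lia. Qed.

Lemma grid_bound bound n : bound (grid bound n) < grid bound (S n).
Proof. simpl. lia. Qed.

(* [k] is the first index at which the enumeration [e] jumps over the interval
   [i n, i (S n)); the moves before it are all below [i n]. *)
Definition gap_index (i e : nat -> nat) (k : nat) : Prop :=
  exists n, k <= i n /\ (forall j, j < k -> e j < i n) /\ i (S n) <= e k.

Lemma gap_indices_unbounded (X : subset_w) (i e : nat -> nat) :
  increasing i -> increasing e -> (forall k, X (e k)) ->
  ~ (exists K, forall n, K <= n -> exists x, i n <= x < i (S n) /\ X x) ->
  forall c, exists k, c < k /\ gap_index i e k.
Proof.
  intros Hi He HXe Hmeets c.
  assert (Hmiss : exists n, S (e c) <= n /\ forall x, i n <= x < i (S n) -> ~ X x).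
  { apply NNPP. intros Hno. apply Hmeets. exists (S (e c)). intros n Hn. apply NNPP. intros Hnx.
    apply Hno. exists n. split; [exact Hn |]. intros x Hx HXx. apply Hnx. eauto. }
  destruct Hmiss as [n [Hn Hgap]]. pose proof (increasing_ge_id i Hi n).
  destruct (least_ex (fun k => i n <= e k)) as [k [Hk Hmin]].
  { exists (i n). apply (increasing_ge_id e He). }
  assert (Hck : c < k) by (destruct (le_lt_dec k c); [pose proof (increasing_le e He k c l) |]; lia).
  exists k. split; [exact Hck |]. exists n. split; [| split].
  - specialize (Hmin (k - 1) ltac:(lia)). pose proof (increasing_ge_id e He (k - 1)). lia.
  - intros j Hj. specialize (Hmin j Hj). lia.
  - destruct (le_lt_dec (i (S n)) (e k)); [assumption |]. exfalso. apply (Hgap (e k)); auto.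
Qed.

Lemma I_wins_G1_meager F : proper_filter F -> I_wins_G1 F -> meager F.
Proof.
  intros [HF Hproper] [sigma Hsigma].
  destruct (choice (fun c B => forall l, short c l -> sigma l <= B)) as [bound Hbound].
  { intros c. apply (bounded_on_lists _ (bounded_on_lt c) c sigma). }
  apply (meager_of_interval_partition F (grid bound) (grid_increasing bound)).
  intros X HX. apply NNPP. intros Hmeets.
  destruct (enumerate_infinite X (Hproper X HX)) as [e [He [HXe Hsur]]].
  apply (Hsigma e). split; [exact He | split].
  - intros K.
    destruct (gap_indices_unbounded X _ e (grid_increasing bound) He HXe Hmeets K)
      as [k [HKk [n [Hk [Hbelow Hjump]]]]].
    exists k. split; [lia |].
    pose proof (Hbound _ _ (short_hist e _ k Hk Hbelow)). pose proof (grid_bound bound n). lia.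
  - apply (proj2 (proj2 HF)) with X; [exact HX | exact Hsur].
Qed.

Definition short_history (c : nat) (h : list (list nat)) : Prop :=
  length h <= c /\ Forall (short c) h.

Lemma in_segment (e : nat -> nat) a b x : In x (map e (seq a (b - a))) <-> exists k, a <= k < b /\ e k = x.
Proof.
  rewrite in_map_iff. split.
  - intros [k [Hk Hin]]. apply in_seq in Hin. exists k. split; [lia | exact Hk].
  - intros [k [Hk Hx]]. exists k. split; [exact Hx | apply in_seq; lia].
Qed.

(* II enumerates the member [X] of [F] in blocks, each ending just before a gap
   index; at a gap index the history is short, so I's threshold lies below [e k]. *)
Lemma I_wins_G_meager F : proper_filter F -> I_wins_G F -> meager F.
Proof.
  intros [HF Hproper] [sigma [Hcof Hsigma]].
  destruct (choice (fun h t => forall n, t <= n -> sigma h n) Hcof) as [thr Hthr].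
  destruct (choice (fun c B => forall h, short_history c h -> thr h <= B)) as [bound Hbound].
  { intros c. apply (bounded_on_lists _ (bounded_on_lists _ (bounded_on_lt c) c) c thr). }
  apply (meager_of_interval_partition F (grid bound) (grid_increasing bound)).
  intros X HX. apply NNPP. intros Hmeets.
  destruct (enumerate_infinite X (Hproper X HX)) as [e [He [HXe Hsur]]].
  destruct (choice _ (gap_indices_unbounded X _ e (grid_increasing bound) He HXe Hmeets))
    as [next Hnext].
  set (cut := fun j => Nat.iter (S j) next 0).
  assert (Hcut : increasing cut) by (intros j; apply (Hnext (cut j))).
  assert (Hgap : forall j, gap_index (grid bound) e (cut j))
    by (intros [|j]; apply Hnext).
  set (s := fun j => map e (seq (cut j) (cut (S j) - cut j))).
  apply (Hsigma s).
  - intros j. split.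
    + unfold s. specialize (Hcut j). destruct (cut (S j) - cut j) eqn:E; [lia | discriminate].
    + destruct (Hgap j) as [n [Hjn [Hbelow Hjump]]].
      assert (Hshort : short_history (grid bound n) (hist s j)).
      { pose proof (increasing_ge_id cut Hcut j). split; [rewrite hist_length; lia |].
        apply Forall_forall. intros b Hb. apply in_hist in Hb. destruct Hb as [j' [Hj' <-]].
        pose proof (increasing_le cut Hcut (S j') j Hj'). split.
        - unfold s. rewrite length_map, length_seq. lia.
        - apply Forall_forall. intros y Hy. apply in_segment in Hy. destruct Hy as [k [Hk <-]].
          apply Hbelow. lia. }
      intros x Hx. apply in_segment in Hx. destruct Hx as [k [Hk <-]]. apply Hthr.
      pose proof (Hbound _ _ Hshort). pose proof (grid_bound bound n).
      pose proof (increasing_le e He (cut j) k ltac:(lia)). lia.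
  - apply (proj2 (proj2 HF)) with (fun x => X x /\ e (cut 0) <= x).
    + apply (proj1 (proj2 HF)); [exact HX |]. apply (proj1 HF). exists (e (cut 0)). auto.
    + intros x [HXx Hx]. destruct (Hsur x HXx) as [k <-].
      assert (Hk : cut 0 <= k)
        by (destruct (le_lt_dec (cut 0) k); [| pose proof (increasing_lt e He k (cut 0) l)]; lia).
      destruct (increasing_bracket cut Hcut k Hk) as [j Hj].
      exists j. apply in_segment. eauto.
Qed.

(** * Player II never wins the game with cofinite sets *)

Lemma proper_filter_meet F X Y : proper_filter F -> F X -> F Y ->
  forall N, exists x, N <= x /\ X x /\ Y x.
Proof.
  intros [[_ [Hmeet _]] Hproper] HX HY N. destruct (Hproper _ (Hmeet _ _ HX HY) N) as [x Hx].
  exists x. tauto.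
Qed.

Definition tail_from (t : nat) : subset_w := fun n => t <= n.

Lemma hist_map {A B} (f : A -> B) (x : nat -> A) k : hist (fun j => f (x j)) k = map f (hist x k).
Proof. unfold hist. rewrite map_map. reflexivity. Qed.

Section NoWinG.
Variable tau : list subset_w -> subset_w -> list nat.
Hypothesis tau_legal : forall h X, cofinite X -> legal_finite (tau h X) X.

Definition answer (h : list nat) (t : nat) : list nat := tau (map tail_from h) (tail_from t).

(* I plays tails in two plays at once, alternately; each new threshold exceeds
   every number II has named so far in either play. *)
Fixpoint rounds (r : nat) : list nat * list nat * nat :=
  match r with
  | 0 => ([], [], 0)
  | S r => let '(a, b, M) := rounds r in
           let MA := Nat.max M (list_max (answer a (S M))) in
           (a ++ [S M], b ++ [S MA], Nat.max MA (list_max (answer b (S MA))))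
  end.

Definition histA r := fst (fst (rounds r)).
Definition histB r := snd (fst (rounds r)).
Definition ceilB r := snd (rounds r).
Definition ceilA r := Nat.max (ceilB r) (list_max (answer (histA r) (S (ceilB r)))).

Lemma rounds_S r : rounds (S r) =
  (histA r ++ [S (ceilB r)], histB r ++ [S (ceilA r)],
   Nat.max (ceilA r) (list_max (answer (histB r) (S (ceilA r))))).
Proof. unfold ceilA, histA, histB, ceilB. simpl. destruct (rounds r) as [[a b] M]. reflexivity. Qed.

Lemma histA_eq r : histA r = hist (fun k => S (ceilB k)) r.
Proof. induction r as [|r IH]; [reflexivity |]. unfold histA at 1. rewrite rounds_S, hist_S, IH. reflexivity. Qed.

Lemma histB_eq r : histB r = hist (fun k => S (ceilA k)) r.
Proof. induction r as [|r IH]; [reflexivity |]. unfold histB at 1. rewrite rounds_S, hist_S, IH. reflexivity. Qed.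

Lemma ceilB_S r : ceilB (S r) = Nat.max (ceilA r) (list_max (answer (histB r) (S (ceilA r)))).
Proof. unfold ceilB at 1. rewrite rounds_S. reflexivity. Qed.

Lemma ceilB_mono r r' : r <= r' -> ceilB r <= ceilB r'.
Proof. induction 1; [lia | rewrite ceilB_S; unfold ceilA; lia]. Qed.

Lemma answer_bounds h t x : In x (answer h t) -> t <= x /\ x <= list_max (answer h t).
Proof.
  intros Hx. split; [| apply le_list_max, Hx].
  apply (proj2 (tau_legal (map tail_from h) (tail_from t) ltac:(exists t; auto))), Hx.
Qed.

Lemma answers_disjoint k j x :
  In x (answer (histA k) (S (ceilB k))) -> In x (answer (histB j) (S (ceilA j))) -> False.
Proof.
  intros HxA HxB. apply answer_bounds in HxA. apply answer_bounds in HxB.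
  pose proof (ceilB_S j) as Hj. unfold ceilA in *.
  destruct (lt_eq_lt_dec k j) as [[Hkj | <-] | Hjk]; [| lia |].
  - pose proof (ceilB_mono (S k) j Hkj) as Hmono. rewrite ceilB_S in Hmono. unfold ceilA in Hmono. lia.
  - pose proof (ceilB_mono (S j) k Hjk). lia.
Qed.

End NoWinG.

Lemma II_not_wins_G F : proper_filter F -> ~ II_wins_G F.
Proof.
  intros HP [tau [Hlegal Hwin]].
  pose proof (Hwin (fun k => tail_from (S (ceilB tau k))) ltac:(intros k; eexists; eauto)) as HA.
  pose proof (Hwin (fun k => tail_from (S (ceilA tau k))) ltac:(intros k; eexists; eauto)) as HB.
  destruct (proper_filter_meet F _ _ HP HA HB 0) as [x [_ [[k Hk] [j Hj]]]].
  rewrite hist_map, <- histA_eq in Hk. rewrite hist_map, <- histB_eq in Hj.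
  exact (answers_disjoint tau Hlegal k j x Hk Hj).
Qed.

(** * Player II never wins G_1 *)

Lemma chain_limit (W : nat -> list nat) :
  (forall r, exists t, W (S r) = W r ++ t) -> (forall r, length (W r) < length (W (S r))) ->
  exists m : nat -> nat, forall r, hist m (length (W r)) = W r.
Proof.
  intros Hext Hlen.
  assert (Hpre : forall r r', r <= r' -> exists t, W r' = W r ++ t).
  { induction 1 as [|r' _ [t Ht]]; [exists []; symmetry; apply app_nil_r |].
    destruct (Hext r') as [t' Ht']. exists (t ++ t'). rewrite Ht', Ht, app_assoc. reflexivity. }
  assert (Hnth : forall r r' i, i < length (W r) -> i < length (W r') -> nth i (W r) 0 = nth i (W r') 0).
  { intros r r' i Hi Hi'. destruct (le_ge_dec r r') as [Hrr | Hrr];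
      [destruct (Hpre r r' Hrr) as [t ->] | destruct (Hpre r' r Hrr) as [t ->]];
      rewrite app_nth1 by assumption; reflexivity. }
  exists (fun k => nth k (W (S k)) 0). intros r. apply nth_ext with 0 0; [apply hist_length |].
  intros i Hi. rewrite hist_length in Hi. rewrite nth_hist by exact Hi. apply Hnth; [| exact Hi].
  pose proof (increasing_ge_id (fun r => length (W r)) Hlen (S i)). simpl in *. lia.
Qed.

Definition extend (h : list nat) (f : nat -> nat) (k : nat) : nat :=
  if k <? length h then nth k h 0 else f (k - length h).

Lemma hist_extend h f : hist (extend h f) (length h) = h.
Proof.
  apply nth_ext with 0 0; [apply hist_length |]. intros i Hi. rewrite hist_length in Hi.
  rewrite nth_hist by exact Hi. unfold extend. rewrite (proj2 (Nat.ltb_lt _ _) Hi). reflexivity.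
Qed.

Lemma extend_after h f j : extend h f (length h + j) = f j.
Proof.
  unfold extend. destruct (Nat.ltb_spec (length h + j) (length h)); [lia |]. f_equal. lia.
Qed.

Section NoWinG1.
Variable F : subset_w -> Prop.
Hypothesis HF : proper_filter F.
Variable tau : list nat -> nat -> nat.
Hypothesis tau_wins : forall m, II_wins_play_G1 F m (fun k => tau (hist m k) (m k)).

Definition unbounded_at (h : list nat) : Prop := forall T, exists x, T < tau h x.

Definition response (h : list nat) (i : nat) : nat := tau (firstn i h) (nth i h 0).

Definition top (h : list nat) : nat := list_max (map (response h) (seq 0 (length h))).

Lemma response_le_top h i : i < length h -> response h i <= top h.
Proof. intros Hi. apply le_list_max, in_map, in_seq. lia. Qed.

Lemma response_of_play (m : nat -> nat) h i : hist m (length h) = h -> i < length h ->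
  tau (hist m i) (m i) = response h i.
Proof.
  intros Hm Hi. unfold response. rewrite <- Hm at 1 2.
  rewrite firstn_hist, nth_hist by lia. reflexivity.
Qed.

Variable bound : list nat -> nat.
Hypothesis bound_spec : forall h, ~ unbounded_at h -> forall x, tau h x <= bound h.

Fixpoint walk (h : list nat) (j : nat) : list nat :=
  match j with
  | 0 => h
  | S j => walk h j ++ [bound (walk h j)]
  end.

Lemma walk_extends h j : exists t, walk h j = h ++ t.
Proof.
  induction j as [|j [t Ht]]; [exists []; symmetry; apply app_nil_r |].
  simpl. rewrite Ht. eexists. rewrite <- app_assoc. reflexivity.
Qed.

Lemma hist_extend_walk h j :
  hist (extend h (fun j => bound (walk h j))) (length h + j) = walk h j.
Proof.
  induction j as [|j IH]; [rewrite Nat.add_0_r; apply hist_extend |].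
  rewrite Nat.add_succ_r, hist_S, IH, extend_after. reflexivity.
Qed.

(* Along a walk II never beats I's move, so II, winning, must leave the walk's
   bounded positions. *)
Lemma walk_reaches_unbounded h : exists j, unbounded_at (walk h j).
Proof.
  apply NNPP. intros Hno.
  set (m := extend h (fun j => bound (walk h j))).
  destruct (tau_wins m) as [_ [Hinf _]]. destruct (Hinf (length h)) as [k [Hk Hlt]].
  replace k with (length h + (k - length h)) in Hlt by lia.
  unfold m in Hlt. rewrite hist_extend_walk, extend_after in Hlt.
  assert (Hb : ~ unbounded_at (walk h (k - length h))) by (intros Hu; apply Hno; eauto).
  specialize (bound_spec _ Hb (bound (walk h (k - length h)))). lia.
Qed.

Variable reach : list nat -> nat.
Hypothesis reach_spec : forall h, unbounded_at (walk h (reach h)).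
Variable push : list nat -> nat -> nat.
Hypothesis push_spec : forall h T, unbounded_at h -> T < tau h (push h T).

Definition advance (h : list nat) (T : nat) : list nat :=
  walk (h ++ [push h T]) (reach (h ++ [push h T])).

Lemma advance_extends h T : exists t, advance h T = h ++ push h T :: t.
Proof.
  destruct (walk_extends (h ++ [push h T]) (reach (h ++ [push h T]))) as [t Ht].
  exists t. unfold advance. rewrite Ht, <- app_assoc. reflexivity.
Qed.

Lemma advance_forces (m : nat -> nat) h T :
  unbounded_at h -> hist m (length (advance h T)) = advance h T ->
  increasing (fun k => tau (hist m k) (m k)) ->
  forall i, length h <= i -> T < tau (hist m i) (m i).
Proof.
  intros Hu Hm Hinc i Hi. destruct (advance_extends h T) as [t Ht]. rewrite Ht in Hm.
  assert (Hlen : length h < length (h ++ push h T :: t)) by (rewrite length_app; simpl; lia).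
  pose proof (increasing_le _ Hinc (length h) i Hi) as Hle. cbv beta in Hle.
  rewrite (response_of_play m _ (length h) Hm Hlen) in Hle. unfold response in Hle.
  rewrite firstn_app, firstn_all, Nat.sub_diag, app_nil_r, nth_middle in Hle.
  specialize (push_spec h T Hu). lia.
Qed.

Definition origin : list nat := walk [] (reach []).

(* Two plays against II: each new phase pushes II's next answer above everything
   II has answered so far in both plays. *)
Fixpoint leapfrog (r : nat) : list nat * list nat :=
  match r with
  | 0 => (origin, origin)
  | S r => let '(a, b) := leapfrog r in
           let a' := advance a (S (Nat.max (top a) (top b))) in
           (a', advance b (S (Nat.max (top a') (top b))))
  end.

Definition playA r := fst (leapfrog r).
Definition playB r := snd (leapfrog r).

Lemma playA_S r : playA (S r) = advance (playA r) (S (Nat.max (top (playA r)) (top (playB r)))).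
Proof. unfold playA, playB. simpl. destruct (leapfrog r). reflexivity. Qed.

Lemma playB_S r :
  playB (S r) = advance (playB r) (S (Nat.max (top (playA (S r))) (top (playB r)))).
Proof. rewrite playA_S. unfold playA, playB. simpl. destruct (leapfrog r). reflexivity. Qed.

Lemma playA_unbounded r : unbounded_at (playA r).
Proof. destruct r; [apply reach_spec | rewrite playA_S; apply reach_spec]. Qed.

Lemma playB_unbounded r : unbounded_at (playB r).
Proof. destruct r; [apply reach_spec | rewrite playB_S; apply reach_spec]. Qed.

Lemma advance_chain (W : nat -> list nat) (T : nat -> nat) :
  (forall r, W (S r) = advance (W r) (T r)) ->
  (forall r, exists t, W (S r) = W r ++ t) /\ (forall r, length (W r) < length (W (S r))).
Proof.
  intros HW. split; intros r; rewrite HW; destruct (advance_extends (W r) (T r)) as [t ->];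
    [eauto | rewrite length_app; simpl; lia].
Qed.

Lemma leapfrog_contradiction : False.
Proof.
  destruct (advance_chain playA _ playA_S) as [extA lenA].
  destruct (advance_chain playB _ playB_S) as [extB lenB].
  destruct (chain_limit playA extA lenA) as [mA HmA].
  destruct (chain_limit playB extB lenB) as [mB HmB].
  destruct (tau_wins mA) as [incA [_ RA]]. destruct (tau_wins mB) as [incB [_ RB]].
  destruct (proper_filter_meet F _ _ HF RA RB (S (top origin))) as [x [Hx [[i <-] [j Hj]]]].
  assert (Hbig : forall (m : nat -> nat) (W : nat -> list nat) k, W 0 = origin ->
            (forall r, hist m (length (W r)) = W r) -> S (top origin) <= tau (hist m k) (m k) ->
            length (W 0) <= k).
  { intros m W k HW0 Hm Hk. destruct (le_lt_dec (length (W 0)) k) as [Hle | Hlt]; [exact Hle |].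
    rewrite (response_of_play m _ k (Hm 0) Hlt), HW0 in Hk.
    rewrite HW0 in Hlt. pose proof (response_le_top _ _ Hlt). lia. }
  destruct (increasing_bracket (fun r => length (playA r)) lenA i (Hbig mA playA i eq_refl HmA Hx))
    as [ra Hra].
  destruct (increasing_bracket (fun r => length (playB r)) lenB j
              (Hbig mB playB j eq_refl HmB ltac:(rewrite Hj; exact Hx))) as [rb Hrb].
  pose proof (advance_forces mA _ _ (playA_unbounded ra) ltac:(rewrite <- playA_S; apply HmA) incA i
                ltac:(lia)) as HA.
  pose proof (advance_forces mB _ _ (playB_unbounded rb) ltac:(rewrite <- playB_S; apply HmB) incB j
                ltac:(lia)) as HB.
  rewrite Hj in HB.
  destruct (le_lt_dec ra rb) as [Hab | Hba].
  - pose proof (increasing_le _ lenA (S ra) (S rb) ltac:(lia)).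
    rewrite (response_of_play mA _ i (HmA (S rb))) in HA, HB by lia.
    pose proof (response_le_top (playA (S rb)) i ltac:(lia)). lia.
  - pose proof (increasing_le _ lenB (S rb) ra Hba).
    rewrite <- Hj in HA, HB. rewrite (response_of_play mB _ j (HmB ra)) in HA, HB by lia.
    pose proof (response_le_top (playB ra) j ltac:(lia)). lia.
Qed.

End NoWinG1.

Lemma II_not_wins_G1 F : proper_filter F -> ~ II_wins_G1 F.
Proof.
  intros HF [tau Hwin].
  destruct (choice (fun h B => ~ unbounded_at tau h -> forall x, tau h x <= B)) as [bound Hbound].
  { intros h. destruct (classic (unbounded_at tau h)) as [Hu | Hb]; [exists 0; tauto |].
    apply not_all_ex_not in Hb. destruct Hb as [B HB]. exists B. intros _ x.
    destruct (le_lt_dec (tau h x) B); [assumption | exfalso; eauto]. }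
  destruct (choice _ (walk_reaches_unbounded F tau Hwin bound Hbound)) as [reach Hreach].
  destruct (choice (fun (p : list nat * nat) x => unbounded_at tau (fst p) -> snd p < tau (fst p) x))
    as [push Hpush].
  { intros [h T]. destruct (classic (unbounded_at tau h)) as [Hu | Hb]; [| exists 0; tauto].
    destruct (Hu T) as [x Hx]. eauto. }
  exact (leapfrog_contradiction F HF tau Hwin bound reach Hreach (fun h T => push (h, T))
           (fun h T => Hpush (h, T))).
Qed.

Theorem theorem2p11 (F : subset_w -> Prop) :
  proper_filter F ->
  ((I_wins_G1 F <-> I_wins_G F) /\ (II_wins_G1 F <-> II_wins_G F)) /\
  ((I_wins_G1 F <-> meager F) /\ (I_wins_G F <-> meager F)) /\
  (~ II_wins_G1 F /\ ~ II_wins_G F).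
Proof.
  intros HP.
  assert (HG1 : I_wins_G1 F <-> meager F).
  { split; [apply I_wins_G1_meager, HP |].
    intros [N [HN Hcover]]. exact (meager_I_wins_G1 F N (proj1 HP) HN Hcover). }
  assert (HG : I_wins_G F <-> meager F).
  { split; [apply I_wins_G_meager, HP |].
    intros [N [HN Hcover]]. exact (meager_I_wins_G F N (proj1 HP) HN Hcover). }
  pose proof (II_not_wins_G1 F HP). pose proof (II_not_wins_G F HP).
  tauto.
Qed.
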